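(* Fix a positive integer $n$ and a nonzero $n$-partition $\lambda$ with $\lambda_n=0$. For every $n$-semistandard tableau $T$ of shape $\lambda$, the final permutation $\pi_T$ of the greedy procedure lies in $S_n^\lambda$.
   Context: Identify $\lambda=(\lambda_1,\dots,\lambda_n)$ with its Young diagram; $c_j$ is the length of column $j$; $\zeta_1<\dots<\zeta_d$ are the distinct column lengths, $\zeta_0:=0$, $\zeta_{d+1}:=n$. $S_n^\lambda$ is the set of permutations $\phi$ (one-line form) with $\phi_{\zeta_{h-1}+1}<\dots<\phi_{\zeta_h}$ for $1\le h\le d+1$. Write $(j,i)$ for the box in column $j$, row $i$. Reading order: $(l,k)\le(j,i)$ iff $l<j$, or $l=j$ and $k\ge i$; convention $(j,c_j+1)$ means $(j-1,1)$. An $n$-semistandard tableau $T$ of shape $\lambda$ has entries in $[n]$, weakly increasing along rows, strictly increasing down columns; $T(j,i)$ is its entry, $C_j$ its $j$-th column. Greedy procedure: $\pi^{(1,1)}$ has first $c_1$ entries those of $C_1$ increasing, followed by the rest of $[n]$ increasing. For $(j,i)$ with $j\ge2$ in reading order from $(2,c_2)$ to $(\lambda_1,1)$, define $\pi^{(j,i)}$ from $\pi:=\pi^{(j,i+1)}$: if $T(j-1,i)=T(j,i)$ set $\pi^{(j,i)}=\pi$; otherwise let $i_0=i$, and given $i_{x-1}$ with $\pi_{i_{x-1}}<T(j,i)$ let $i_x$ be the smallest index $>c_j$ with $\pi_{i_{x-1}}<\pi_{i_x}\le T(j,i)$, stopping at $i_m$ with $\pi_{i_m}=T(j,i)$; set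 $\pi^{(j,i)}_{i_x}=\pi_{i_{x-1}}$ ($1\le x\le m$), $\pi^{(j,i)}_{i_0}=\pi_{i_m}$, others unchanged. $\pi_T:=\pi^{(\lambda_1,1)}$. *)

From mathcomp Require Import all_boot.
Set Implicit Arguments. Unset Strict Implicit. Unset Printing Implicit Defensive.

(* Conventions: rows i and columns j are 1-indexed; a partition lambda is a
   seq of length n (lambda_i = nth 0 lambda (i-1)); permutations of [n] are
   given in one-line form as seqs (phi_k = nth 0 phi (k-1)). *)

Definition lam (lambda : seq nat) (i : nat) : nat := nth 0 lambda i.-1.

Definition is_npartition (n : nat) (lambda : seq nat) : bool :=
  (size lambda == n) && sorted geq lambda.

Definition nonzero_partition (lambda : seq nat) : bool := has (fun x => 0 < x) lambda.

Definition ncols (lambda : seq nat) : nat := head 0 lambda.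

Definition collen (lambda : seq nat) (j : nat) : nat := count (fun l => j <= l) lambda.

(* box (j,i) : column j, row i *)
Definition in_diagram (n : nat) (lambda : seq nat) (j i : nat) : bool :=
  [&& 1 <= i, i <= n, 1 <= j & j <= lam lambda i].

(* T j i = entry of T in column j, row i *)
Definition is_ssyt (n : nat) (lambda : seq nat) (T : nat -> nat -> nat) : Prop :=
  (forall j i, in_diagram n lambda j i -> 1 <= T j i <= n) /\
  (forall j i, in_diagram n lambda j i -> in_diagram n lambda j.+1 i ->
     T j i <= T j.+1 i) /\
  (forall j i, in_diagram n lambda j i -> in_diagram n lambda j i.+1 ->
     T j i < T j i.+1).

Definition is_perm_seq (n : nat) (phi : seq nat) : bool := perm_eq phi (iota 1 n).

Definition zetas (n : nat) (lambda : seq nat) : seq nat :=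
  0 :: sort leq (undup [seq collen lambda j | j <- iota 1 (ncols lambda)]) ++ [:: n].

Definition zblock (n : nat) (lambda : seq nat) (phi : seq nat) (h : nat) : seq nat :=
  let z := zetas n lambda in
  take (nth 0 z h - nth 0 z h.-1) (drop (nth 0 z h.-1) phi).

Definition in_Snlam (n : nat) (lambda : seq nat) (phi : seq nat) : bool :=
  is_perm_seq n phi &&
  all (fun h => sorted ltn (zblock n lambda phi h)) (iota 1 (size (zetas n lambda)).-1).

Definition pi_at (p : seq nat) (k : nat) : nat := nth 0 p k.-1.

(* the chain i_0 = cur, i_1, ..., i_m (None if ill-defined) *)
Fixpoint gchain (n : nat) (fuel : nat) (p : seq nat) (t cj cur : nat)
  : option (seq nat) :=
  match fuel with
  | 0 => None
  | fuel'.+1 =>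
    if pi_at p cur == t then Some [:: cur]
    else if pi_at p cur < t then
      match [seq k <- iota cj.+1 (n - cj) |
               (pi_at p cur < pi_at p k) && (pi_at p k <= t)] with
      | k :: _ => omap (cons cur) (gchain n fuel' p t cj k)
      | [::] => None
      end
    else None
  end.

(* pi'_{i_x} = pi_{i_{x-1}} (x>=1), pi'_{i_0} = pi_{i_m} *)
Definition cycle_apply (p : seq nat) (idx : seq nat) : seq nat :=
  foldl (fun q (kv : nat * nat) => set_nth 0 q kv.1.-1 kv.2) p
        (zip idx (rotr 1 [seq pi_at p k | k <- idx])).

Definition gstep (n : nat) (lambda : seq nat) (T : nat -> nat -> nat)
  (p : seq nat) (ji : nat * nat) : option (seq nat) :=
  let: (j, i) := ji in
  if T j.-1 i == T j i then Some p
  else omap (cycle_apply p) (gchain n n.+1 p (T j i) (collen lambda j) i).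

Definition pi_init (n : nat) (lambda : seq nat) (T : nat -> nat -> nat) : seq nat :=
  let C1 := [seq T 1 i | i <- iota 1 (collen lambda 1)] in
  sort leq C1 ++ [seq k <- iota 1 n | k \notin C1].

Definition greedy_order (lambda : seq nat) : seq (nat * nat) :=
  flatten [seq [seq (j, i) | i <- rev (iota 1 (collen lambda j))]
          | j <- iota 2 (ncols lambda).-1].

(* pi_T, or None if some step of the procedure is ill-defined *)
Definition piT (n : nat) (lambda : seq nat) (T : nat -> nat -> nat) : option (seq nat) :=
  foldl (fun o ji => obind (fun p => gstep n lambda T p ji) o)
        (Some (pi_init n lambda T)) (greedy_order lambda).

(* While column [j] is processed bottom-up, the greedy permutation keeps the
   following shape: its first [r] entries are the top of column [j-1], its
   entries [r+1..c_j] are the rest of column [j], and beyond position [c_j] it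
   ascends at every position that is not a column length.  Processing box
   [(j, r)] when [T(j-1,r) < T(j,r)]: column strictness and row weakness force
   the value [T(j,r)] to sit beyond [c_j], so the chain of the procedure reaches
   it; rotating values forward along the chain puts [T(j,r)] at [r] and, since
   each chain position is the first one carrying a value in its window, keeps
   all those ascents.  After the last column every position outside the
   [zeta_h] is an ascent, i.e. every block of [pi_T] is increasing. *)

From mathcomp Require Import all_boot zify.

Set Implicit Arguments.
Unset Strict Implicit.
Unset Printing Implicit Defensive.

Lemma sorted_geq_count (s : seq nat) j k : sorted geq s -> 0 < j -> 0 < k ->
  (k <= count (fun l => j <= l) s) = (j <= nth 0 s k.-1).
Proof.
elim: s k => [|x s IH] k s_sorted j_gt0 k_gt0 /=; first by rewrite nth_nil; lia.
have /allP s_le_x := order_path_min (rev_trans leq_trans) s_sorted.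
case jx: (j <= x).
  case: k k_gt0 => [|[|k]] // _.
  by rewrite /= add1n ltnS IH //; exact: path_sorted s_sorted.
have -> : count (fun l => j <= l) s = 0.
  apply/eqP; rewrite -leqn0 leqNgt -has_count; apply/hasPn => y /s_le_x y_le_x.
  by apply/negP => /leq_trans/(_ y_le_x); rewrite jx.
case: k k_gt0 => [|[|k]] // _ /=.
apply/esym/negbTE; rewrite -ltnNge; case: (ltnP k (size s)) => [k_lt|k_ge].
  by apply: leq_ltn_trans (s_le_x _ (mem_nth 0 k_lt)) _; rewrite ltnNge jx.
by rewrite nth_default.
Qed.

Lemma collen_le_size lambda j : collen lambda j <= size lambda.
Proof. exact: count_size. Qed.

Lemma collen_le n lambda j : is_npartition n lambda -> collen lambda j <= n.
Proof. by case/andP => /eqP <- _; exact: collen_le_size. Qed.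

Lemma collen_mono lambda j j' : j <= j' -> collen lambda j' <= collen lambda j.
Proof. by move=> le_jj'; apply: sub_count => l /=; exact: leq_trans. Qed.

Lemma collen_in_diagram n lambda j i : is_npartition n lambda -> 0 < j -> 0 < i ->
  i <= collen lambda j -> in_diagram n lambda j i.
Proof.
move=> /andP [/eqP size_l sorted_l] j_gt0 i_gt0 i_le.
have i_le_n : i <= n by rewrite -size_l (leq_trans i_le (collen_le_size _ _)).
by rewrite /in_diagram j_gt0 i_gt0 i_le_n /lam -sorted_geq_count.
Qed.

Lemma ncols_gt0 n lambda : is_npartition n lambda -> nonzero_partition lambda ->
  0 < ncols lambda.
Proof.
case: lambda => [//|x s] /andP [_ sorted_l] /hasP [y].
have /allP s_le_x := order_path_min (rev_trans leq_trans) sorted_l.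
by rewrite in_cons => /orP [/eqP -> //|/s_le_x y_le_x y_gt0]; exact: leq_trans y_le_x.
Qed.

Lemma collen_in_zetas n lambda j : 0 < j <= ncols lambda -> collen lambda j \in zetas n lambda.
Proof.
move=> j_range; rewrite /zetas in_cons mem_cat mem_sort mem_undup map_f ?orbT //.
by rewrite mem_iota; lia.
Qed.

Lemma zetas_sorted n lambda : is_npartition n lambda -> sorted leq (zetas n lambda).
Proof.
move=> lambdaP; rewrite /zetas /= cats1 rcons_path.
set U := sort leq _; have U_sorted : sorted leq U by exact: (sort_sorted leq_total).
apply/andP; split; first by case: U U_sorted.
have := mem_last 0 U; rewrite in_cons => /orP [/eqP -> // | ].
by rewrite mem_sort mem_undup => /mapP [j _ ->]; exact: collen_le.
Qed.

Lemma notin_sorted_gap (z : seq nat) h m : sorted leq z -> 0 < h < size z ->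
  nth 0 z h.-1 < m < nth 0 z h -> m \notin z.
Proof.
move=> z_sorted h_range m_range; apply/negP => /(nthP 0) [l l_lt z_l].
have z_mono := sorted_leq_nth leq_trans leqnn 0 z_sorted.
case: (leqP l h.-1) => [l_le | l_gt].
  by have := z_mono l h.-1; rewrite !inE z_l => /(_ l_lt ltac:(lia) l_le); lia.
by have := z_mono h l; rewrite !inE z_l => /(_ ltac:(lia) l_lt ltac:(lia)); lia.
Qed.

Lemma ssyt_col_lt n lambda T j a b : is_npartition n lambda -> is_ssyt n lambda T ->
  0 < j -> 0 < a -> a < b -> b <= collen lambda j -> T j a < T j b.
Proof.
move=> lambdaP [_ [_ col_lt]] j_gt0 a_gt0; elim: b => [//|b IH] ab b_le.
have T_b : T j b < T j b.+1 by apply: col_lt; apply: collen_in_diagram => //; lia.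
case: (a =P b) => [-> //|ne]; apply: ltn_trans T_b; apply: IH; lia.
Qed.

Lemma ssyt_row_le n lambda T j i : is_npartition n lambda -> is_ssyt n lambda T ->
  1 < j -> 0 < i -> i <= collen lambda j -> T j.-1 i <= T j i.
Proof.
move=> lambdaP [_ [row_le _]] j_gt1 i_gt0 i_le.
have i_le' : i <= collen lambda j.-1 by apply: leq_trans i_le (collen_mono _ _); lia.
have := row_le j.-1 i; rewrite prednK; last lia.
by apply; apply: collen_in_diagram => //; lia.
Qed.

Section PermIota.
Variables (n : nat) (p : seq nat).
Hypothesis p_perm : perm_eq p (iota 1 n).

Lemma size_perm_iota : size p = n.
Proof. by rewrite (perm_size p_perm) size_iota. Qed.

Lemma pi_at_range k : 0 < k <= n -> 0 < pi_at p k <= n.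
Proof.
move=> k_range; have : pi_at p k \in p by apply: mem_nth; rewrite size_perm_iota; lia.
by rewrite (perm_mem p_perm) mem_iota; lia.
Qed.

Lemma pi_at_inj a b : 0 < a <= n -> 0 < b <= n -> pi_at p a = pi_at p b -> a = b.
Proof.
move=> a_range b_range e; have /(uniqP 0) p_uniq : uniq p.
  by rewrite (perm_uniq p_perm) iota_uniq.
have := p_uniq a.-1 b.-1; rewrite !inE size_perm_iota => /(_ ltac:(lia) ltac:(lia) e); lia.
Qed.

Lemma pi_at_surj v : 0 < v <= n -> exists2 a, 0 < a <= n & pi_at p a = v.
Proof.
move=> v_range; have v_in : v \in p by rewrite (perm_mem p_perm) mem_iota; lia.
exists (index v p).+1; last by rewrite /pi_at nth_index.
by rewrite -size_perm_iota index_mem v_in.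
Qed.

End PermIota.

Lemma inj_perm_iota (s : seq nat) n : size s = n ->
  (forall k, 0 < k <= n -> 0 < pi_at s k <= n) ->
  (forall a b, 0 < a <= n -> 0 < b <= n -> pi_at s a = pi_at s b -> a = b) ->
  perm_eq s (iota 1 n).
Proof.
move=> size_s s_range s_inj.
have s_uniq : uniq s.
  apply/(uniqP 0) => a b; rewrite !inE size_s => a_lt b_lt e.
  by have := s_inj a.+1 b.+1 ltac:(lia) ltac:(lia) e; lia.
have s_sub : {subset s <= iota 1 n}.
  move=> x /(nthP 0) [m m_lt <-]; rewrite mem_iota.
  by have := s_range m.+1; rewrite size_s in m_lt; rewrite /pi_at /=; lia.
have [_ s_eq] := uniq_min_size s_uniq s_sub ltac:(by rewrite size_iota size_s).
by apply: uniq_perm => //; exact: iota_uniq.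
Qed.

Definition chain_rel (n : nat) (p : seq nat) (t cj a b : nat) : bool :=
  [&& cj < b, b <= n, pi_at p a < pi_at p b, pi_at p b <= t &
   all (fun k => ~~ ((pi_at p a < pi_at p k) && (pi_at p k <= t))) (iota cj.+1 (b - cj.+1))].

Lemma filter_iota_cons (P : pred nat) m len k r :
  [seq x <- iota m len | P x] = k :: r ->
  [/\ m <= k < m + len, P k & forall k', m <= k' < k -> ~~ P k'].
Proof.
elim: len m => [|len IH] m //=; case Pm: (P m).
  by move=> [<- _]; split => //; [lia | move=> k'; lia].
move=> /IH [k_range Pk before_k]; split => //; first lia.
move=> k' k'_range; case: (k' =P m) => [-> | ne]; first by rewrite Pm.
apply: before_k; lia.
Qed.

Lemma gchain_path n p t cj a : cj < a <= n -> pi_at p a = t ->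
  forall fuel cur, pi_at p cur <= t -> t - pi_at p cur < fuel ->
  exists rest, [/\ gchain n fuel p t cj cur = Some (cur :: rest),
    path (chain_rel n p t cj) cur rest & pi_at p (last cur rest) = t].
Proof.
move=> a_range pa_t; elim=> [|fuel IH] cur cur_le fuel_gt //=.
case: eqP => [cur_t | cur_t]; first by exists [::].
have cur_lt : pi_at p cur < t by rewrite ltn_neqAle cur_le andbT; apply/eqP.
rewrite cur_lt; set L := [seq _ <- _ | _].
have : a \in L by rewrite mem_filter mem_iota pa_t leqnn cur_lt /=; lia.
case L_eq: L => [//|k r] _.
have [k_range /andP [cur_k k_t] before_k] := filter_iota_cons L_eq.
have [rest [-> k_path k_last]] := IH k k_t ltac:(lia).
exists (k :: rest); split => //=; rewrite k_path andbT /chain_rel cur_k k_t /=.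
apply/and3P; split; [lia | lia |].
by apply/allP => k' /[!mem_iota] k'_range; apply: before_k; lia.
Qed.

Definition set_at (q : seq nat) (kv : nat * nat) : seq nat := set_nth 0 q kv.1.-1 kv.2.

Lemma size_foldl_set_at (kvs : seq (nat * nat)) q :
  all (fun kv => 0 < kv.1 <= size q) kvs -> size (foldl set_at q kvs) = size q.
Proof.
elim: kvs q => [//|[k v] kvs IH] q /= /andP [/= k_range kvs_range].
have size_q : size (set_at q (k, v)) = size q.
  by rewrite size_set_nth /=; apply/maxn_idPr; lia.
by rewrite IH size_q.
Qed.

Lemma pi_at_foldl_set_at (ks ws : seq nat) q k : uniq ks -> size ws = size ks ->
  all (fun k => 0 < k <= size q) ks -> 0 < k ->
  pi_at (foldl set_at q (zip ks ws)) k =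
    if k \in ks then nth 0 ws (index k ks) else pi_at q k.
Proof.
elim: ks ws q => [|k0 ks IH] [|w0 ws] q //=.
move=> /andP [k0_notin ks_uniq] [size_ws] /andP [k0_range ks_range] k_gt0.
have size_q : size (set_at q (k0, w0)) = size q.
  by rewrite size_set_nth /=; apply/maxn_idPr; lia.
rewrite IH // ?size_q // in_cons eq_sym.
case: (k0 =P k) => [<- | ne] /=; first by rewrite (negbTE k0_notin) /pi_at nth_set_nth /= eqxx.
by case: ifP => // _; rewrite /pi_at nth_set_nth /=; case: eqP => //; lia.
Qed.

Definition cycle_src (idx : seq nat) (k : nat) : nat :=
  if k \in idx then nth 0 (rotr 1 idx) (index k idx) else k.

Lemma pi_at_cycle_apply p idx k : uniq idx -> all (fun k => 0 < k <= size p) idx ->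
  0 < k -> pi_at (cycle_apply p idx) k = pi_at p (cycle_src idx k).
Proof.
move=> idx_uniq idx_range k_gt0; rewrite /cycle_apply -/set_at pi_at_foldl_set_at //;
  last by rewrite size_rotr size_map.
rewrite /cycle_src; case: ifP => // k_in.
by rewrite -map_rotr (nth_map 0) // size_rotr index_mem.
Qed.

Lemma size_cycle_apply p idx : all (fun k => 0 < k <= size p) idx ->
  size (cycle_apply p idx) = size p.
Proof.
move=> idx_range; rewrite /cycle_apply -/set_at size_foldl_set_at //.
set ws := rotr 1 _; move: idx_range.
rewrite -[X in all _ X](@unzip1_zip _ _ _ ws); first by rewrite all_map.
by rewrite size_rotr size_map.
Qed.

Lemma cycle_src_in idx k : k \in idx -> cycle_src idx k \in idx.
Proof.
by move=> k_in; rewrite /cycle_src k_in -(mem_rotr 1) mem_nth // size_rotr index_mem.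
Qed.

Lemma cycle_src_out idx k : k \notin idx -> cycle_src idx k = k.
Proof. by rewrite /cycle_src => /negbTE ->. Qed.

Lemma cycle_src_inj idx : uniq idx -> injective (cycle_src idx).
Proof.
move=> idx_uniq a b; case a_in: (a \in idx); case b_in: (b \in idx).
- rewrite /cycle_src a_in b_in => e.
  have /(uniqP 0) rot_inj : uniq (rotr 1 idx) by rewrite rotr_uniq.
  have := rot_inj (index a idx) (index b idx).
  rewrite !inE size_rotr !index_mem a_in b_in => /(_ isT isT e) ei.
  by rewrite -(nth_index 0 a_in) -(nth_index 0 b_in) ei.
- by move=> e; have := cycle_src_in a_in; rewrite e cycle_src_out ?b_in.
- by move=> e; have := cycle_src_in b_in; rewrite -e cycle_src_out ?a_in.
- by rewrite !cycle_src_out ?a_in ?b_in.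
Qed.

Lemma cycle_src_head i0 rest : cycle_src (i0 :: rest) i0 = last i0 rest.
Proof. by rewrite /cycle_src mem_head /= eqxx lastI rotr1_rcons. Qed.

Lemma cycle_src_nth idx x : uniq idx -> 0 < x < size idx ->
  cycle_src idx (nth 0 idx x) = nth 0 idx x.-1.
Proof.
case/lastP: idx => [|s y] idx_uniq x_range; first by rewrite /= ltn0 andbF in x_range.
rewrite /cycle_src mem_nth; last lia.
rewrite index_uniq //; last lia.
case: x x_range => [//|x] x_range; rewrite rotr1_rcons /=.
have x_lt : x < size s by move: x_range; rewrite size_rcons; lia.
by rewrite nth_rcons x_lt.
Qed.

Section ChainCycle.
Variables (n : nat) (p : seq nat) (t cj i0 : nat) (rest : seq nat).
Hypotheses (p_perm : perm_eq p (iota 1 n)) (i0_gt0 : 0 < i0) (i0_le : i0 <= cj)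
  (cj_le : cj <= n) (chain : path (chain_rel n p t cj) i0 rest).

Local Notation idx := (i0 :: rest).
Local Notation q := (cycle_apply p idx).

Lemma chain_rel_nth x : 0 < x < size idx ->
  chain_rel n p t cj (nth 0 idx x.-1) (nth 0 idx x).
Proof.
by move: chain => /(pathP 0) chainP; case: x => [//|x] /andP [_ x_lt]; exact: chainP.
Qed.

Lemma chain_tail_range k : k \in rest -> cj < k <= n.
Proof.
elim: rest i0 chain => [//|y s IH] x /= /andP [/and5P [y_gt y_le _ _ _] s_path].
by rewrite in_cons => /orP [/eqP -> | /(IH _ s_path)]; [rewrite y_gt y_le|].
Qed.

Lemma chain_range k : k \in idx -> 0 < k <= n.
Proof.
rewrite in_cons => /orP [/eqP -> | /chain_tail_range]; lia.
Qed.

Lemma chain_values_sorted : sorted ltn (map (pi_at p) idx).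
Proof. by rewrite /= path_map; apply: sub_path chain => a b /and5P []. Qed.

Lemma chain_uniq : uniq idx.
Proof.
apply: (@map_uniq _ _ (pi_at p)).
exact: (sorted_uniq ltn_trans ltnn chain_values_sorted).
Qed.

Lemma chain_values_lt x y : x < y < size idx ->
  pi_at p (nth 0 idx x) < pi_at p (nth 0 idx y).
Proof.
move=> /andP [xy y_lt]; have x_lt : x < size idx by apply: ltn_trans y_lt.
rewrite -(nth_map 0 0 _ x_lt) -(nth_map 0 0 _ y_lt).
by apply: (sorted_ltn_nth ltn_trans 0 chain_values_sorted); rewrite /= ?inE /= ?size_map.
Qed.

Lemma chain_index_lt (a b : nat) : a \in idx -> b \in idx -> pi_at p a < pi_at p b ->
  index a idx < index b idx.
Proof.
move=> a_in b_in ab; rewrite ltnNge leq_eqVlt; apply/negP => /orP [/eqP e | ba].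
  by move: ab; rewrite -[a](nth_index 0 a_in) -[b](nth_index 0 b_in) e ltnn.
have := @chain_values_lt (index b idx) (index a idx); rewrite ba index_mem a_in.
move=> /(_ isT); rewrite !nth_index // => ba_val.
by have := ltn_trans ab ba_val; rewrite ltnn.
Qed.

Let idx_range : all (fun k => 0 < k <= size p) idx.
Proof. by apply/allP => k /chain_range; rewrite (size_perm_iota p_perm). Qed.

Lemma pi_at_cycle k : 0 < k -> pi_at q k = pi_at p (cycle_src idx k).
Proof. exact: pi_at_cycle_apply chain_uniq idx_range. Qed.

Lemma cycle_src_range k : 0 < k <= n -> 0 < cycle_src idx k <= n.
Proof.
case k_in: (k \in idx); first by move=> _; apply: chain_range; exact: cycle_src_in.
by rewrite cycle_src_out ?k_in.
Qed.

Lemma perm_cycle_apply : perm_eq q (iota 1 n).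
Proof.
apply: inj_perm_iota => [|k k_range|a b a_range b_range].
- by rewrite size_cycle_apply // (size_perm_iota p_perm).
- by rewrite pi_at_cycle; [apply: (pi_at_range p_perm); apply: cycle_src_range | lia].
rewrite !pi_at_cycle; try lia.
move=> /(pi_at_inj p_perm (cycle_src_range a_range) (cycle_src_range b_range)).
exact: (cycle_src_inj chain_uniq).
Qed.

Lemma pi_at_cycle_head : pi_at q i0 = pi_at p (last i0 rest).
Proof. by rewrite pi_at_cycle // cycle_src_head. Qed.

Lemma pi_at_cycle_fixed k : 0 < k <= cj -> k != i0 -> pi_at q k = pi_at p k.
Proof.
move=> k_range k_i0; rewrite pi_at_cycle; last lia.
rewrite cycle_src_out // in_cons negb_or k_i0 /=.
by apply/negP => /chain_tail_range; lia.
Qed.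

(* The only delicate case is [k \notin idx], [k.+1 \in idx]: minimality of
   [k.+1] in the chain keeps [pi_at p k] out of the window that [k.+1] closes. *)
Lemma cycle_ascent k : cj < k < n -> pi_at p k < pi_at p k.+1 ->
  pi_at q k < pi_at q k.+1.
Proof.
move=> k_range ascent; rewrite !pi_at_cycle; try lia.
have tail_pos j : cj < j -> j \in idx -> 0 < index j idx < size idx.
  move=> j_gt j_in; rewrite index_mem j_in andbT lt0n.
  by apply/eqP => e; move: (nth_index 0 j_in); rewrite e /=; lia.
have src_nth j : cj < j -> j \in idx ->
    cycle_src idx j = nth 0 idx (index j idx).-1.
  by move=> j_gt j_in; rewrite -{1}(nth_index 0 j_in) cycle_src_nth ?chain_uniq ?tail_pos.
case k_in: (k \in idx); case k1_in: (k.+1 \in idx).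
- have /andP [x_gt0 _] := tail_pos k ltac:(lia) k_in.
  have /andP [_ y_lt] := tail_pos k.+1 ltac:(lia) k1_in.
  have xy := chain_index_lt k_in k1_in ascent.
  rewrite (src_nth k ltac:(lia) k_in) (src_nth k.+1 ltac:(lia) k1_in).
  by apply: chain_values_lt; lia.
- have x_pos := tail_pos k ltac:(lia) k_in.
  rewrite (src_nth k ltac:(lia) k_in) (cycle_src_out (negbT k1_in)).
  have /and5P [_ _ prev_lt _ _] := chain_rel_nth x_pos.
  by rewrite nth_index // in prev_lt; exact: ltn_trans ascent.
- have y_pos := tail_pos k.+1 ltac:(lia) k1_in.
  rewrite (src_nth k.+1 ltac:(lia) k1_in) (cycle_src_out (negbT k_in)).
  set b := nth 0 idx _.
  have b_in : b \in idx by apply/mem_nth/(leq_ltn_trans (leq_pred _)); case/andP: y_pos.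
  have /and5P [_ _ _ k1_le /allP window] := chain_rel_nth y_pos.
  rewrite nth_index // -/b in k1_le window.
  have := window k; rewrite mem_iota => /(_ ltac:(lia)).
  rewrite negb_and -!ltnNge => /orP [k_le_b | ]; last by move: k1_le; lia.
  rewrite ltn_neqAle -ltnS k_le_b andbT; apply/eqP => /(pi_at_inj p_perm).
  by move=> /(_ ltac:(lia) (chain_range b_in)) kb; move: k_in; rewrite kb b_in.
- by rewrite !cycle_src_out ?k_in ?k1_in.
Qed.

End ChainCycle.

Definition ascents_beyond (n : nat) (lambda : seq nat) (m : nat) (p : seq nat) : Prop :=
  forall k, m < k < n -> k \notin zetas n lambda -> pi_at p k < pi_at p k.+1.

Lemma in_Snlam_of_ascents n lambda p : is_npartition n lambda ->
  perm_eq p (iota 1 n) -> ascents_beyond n lambda 0 p -> in_Snlam n lambda p.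
Proof.
move=> lambdaP p_perm asc; rewrite /in_Snlam /is_perm_seq p_perm.
apply/allP => h; rewrite mem_iota => h_range.
set z := zetas n lambda; have z_sorted : sorted leq z := zetas_sorted lambdaP.
have h_lt : h < size z by move: h_range; rewrite /z /zetas /=; lia.
rewrite /zblock -/z; set d := nth 0 z h.-1; set e := nth 0 z h.
have size_B : size (take (e - d) (drop d p)) = minn (e - d) (n - d).
  by rewrite size_take_min size_drop (size_perm_iota p_perm).
have B_nth i : i < size (take (e - d) (drop d p)) ->
    nth 0 (take (e - d) (drop d p)) i = pi_at p (d + i).+1.
  by rewrite size_B => i_lt; rewrite nth_take ?nth_drop //; lia.
case: (take _ _) size_B B_nth => // x s size_B B_nth; apply/(pathP 0) => i i_lt.
rewrite -!/(nth 0 (x :: s) _) !B_nth /=; try lia.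
have := B_nth i.+1; rewrite /= ltnS => /(_ i_lt) ->.
rewrite addnS; apply: asc; first by move: size_B => /=; lia.
apply: (@notin_sorted_gap z h _ z_sorted); first lia.
by rewrite -/d -/e; move: size_B => /=; lia.
Qed.

(* [greedy_inv j r p]: [p] is the permutation reached just before box [(j, r)]
   in reading order, i.e. once rows [r+1..c_j] of column [j] are processed. *)
Definition greedy_inv (n : nat) (lambda : seq nat) (T : nat -> nat -> nat) (j r : nat)
    (p : seq nat) : Prop :=
  [/\ perm_eq p (iota 1 n),
      forall k, 0 < k <= r -> pi_at p k = T j.-1 k,
      forall k, r < k <= collen lambda j -> pi_at p k = T j k &
      ascents_beyond n lambda (collen lambda j) p].

Section Greedy.
Variables (n : nat) (lambda : seq nat) (T : nat -> nat -> nat).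
Hypotheses (lambdaP : is_npartition n lambda) (TP : is_ssyt n lambda T).

Local Notation inv := (greedy_inv n lambda T).

Lemma greedy_target_beyond j r p a : 1 < j -> r < collen lambda j -> inv j r.+1 p ->
  T j.-1 r.+1 != T j r.+1 -> 0 < a -> pi_at p a = T j r.+1 -> collen lambda j < a.
Proof.
move=> j_gt1 r_lt [_ done_col todo_col _] T_ne a_gt0 pa_t.
rewrite ltnNge; apply/negP => a_le.
have col_le : collen lambda j <= collen lambda j.-1 by apply: collen_mono; lia.
have row_le : T j.-1 r.+1 <= T j r.+1 by apply: (ssyt_row_le lambdaP TP).
case: (ltngtP a r.+1) => [a_lt | a_gt | a_r].
- have := done_col a ltac:(lia); rewrite pa_t => T_a.
  have := @ssyt_col_lt _ _ _ j.-1 a r.+1 lambdaP TP ltac:(lia) a_gt0 a_lt ltac:(lia).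
  by rewrite -T_a; lia.
- have := todo_col a ltac:(lia); rewrite pa_t => T_a.
  have := @ssyt_col_lt _ _ _ j r.+1 a lambdaP TP ltac:(lia) ltac:(lia) a_gt a_le.
  by rewrite -T_a ltnn.
- by move: T_ne; rewrite -pa_t a_r done_col ?eqxx //; lia.
Qed.

Lemma gstep_inv j r p : 1 < j -> r < collen lambda j -> inv j r.+1 p ->
  exists2 p', gstep n lambda T p (j, r.+1) = Some p' & inv j r p'.
Proof.
move=> j_gt1 r_lt invp; case: (invp) => p_perm done_col todo_col asc.
have p_r : pi_at p r.+1 = T j.-1 r.+1 by apply: done_col; lia.
rewrite /gstep; case: eqP => [T_eq | /eqP T_ne].
  exists p => //; split=> // k k_range; first by apply: done_col; lia.
  by case: (k =P r.+1) => [-> | ne]; [rewrite p_r | apply: todo_col; lia].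
have row_le : T j.-1 r.+1 <= T j r.+1 by apply: (ssyt_row_le lambdaP TP).
set t := T j r.+1 in T_ne row_le *.
have t_range : 0 < t <= n.
  by case: TP => T_range _; apply: T_range; apply: collen_in_diagram => //; lia.
have [a a_range pa_t] := pi_at_surj p_perm t_range.
have a_gt : collen lambda j < a.
  by apply: (greedy_target_beyond j_gt1 r_lt invp T_ne _ pa_t); lia.
have [rest [-> chain last_t]] := @gchain_path n p t (collen lambda j) a
  ltac:(lia) pa_t n.+1 r.+1 ltac:(lia) ltac:(lia).
have cj_le := collen_le j lambdaP.
have fixed := pi_at_cycle_fixed p_perm (ltn0Sn r) r_lt cj_le chain.
exists (cycle_apply p (r.+1 :: rest)) => //; split.
- exact: (perm_cycle_apply p_perm (ltn0Sn r) r_lt cj_le chain).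
- by move=> k k_range; rewrite fixed; [apply: done_col | | apply/eqP]; lia.
- move=> k k_range; case: (k =P r.+1) => [-> | /eqP k_r].
    by rewrite (pi_at_cycle_head p_perm (ltn0Sn r) r_lt cj_le chain).
  by rewrite fixed //; [apply: todo_col|]; lia.
- move=> k k_range k_z; apply: (cycle_ascent p_perm (ltn0Sn r) r_lt cj_le chain k_range).
  exact: asc.
Qed.

Local Notation greedy_fold := (foldl (fun o ji => obind (fun p => gstep n lambda T p ji) o)).

Lemma greedy_column j r p : 1 < j -> r <= collen lambda j -> inv j r p ->
  exists2 p', greedy_fold (Some p) [seq (j, i) | i <- rev (iota 1 r)] = Some p'
    & inv j 0 p'.
Proof.
elim: r p => [|r IH] p j_gt1 r_le invp; first by exists p.
have [p1 step_p1 inv_p1] := gstep_inv j_gt1 r_le invp.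
have -> : iota 1 r.+1 = rcons (iota 1 r) r.+1 by rewrite -cats1 -(addn1 r) iotaD add1n addn1.
rewrite rev_rcons map_cons; cbn [foldl obind oapp]; rewrite step_p1.
exact: (IH p1 j_gt1 (ltnW r_le) inv_p1).
Qed.

Lemma greedy_inv_ascents j p : 0 < j <= ncols lambda -> inv j 0 p ->
  ascents_beyond n lambda 0 p.
Proof.
move=> j_range [_ _ col_j asc] k k_range k_z.
case: (ltngtP (collen lambda j) k) => [c_lt | c_gt | c_eq]; first by apply: asc => //; lia.
- rewrite !col_j; try lia.
  by apply: (ssyt_col_lt lambdaP TP); lia.
- by move: k_z; rewrite -c_eq collen_in_zetas.
Qed.

Lemma greedy_next_column j p : 0 < j < ncols lambda -> inv j 0 p ->
  inv j.+1 (collen lambda j.+1) p.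
Proof.
move=> j_range invp; have asc := greedy_inv_ascents (j := j) ltac:(lia) invp.
case: invp => p_perm _ col_j _; split => // [k k_range | k k_range | k k_range].
- apply: col_j; have := @collen_mono lambda j j.+1; lia.
- lia.
- by apply: asc; lia.
Qed.

Local Notation col1 := [seq T 1 i | i <- iota 1 (collen lambda 1)].

Lemma col1_sorted : sorted ltn col1.
Proof.
apply: (@homo_sorted_in _ _ (mem (iota 1 (collen lambda 1)))); last 2 first.
- exact/allP.
- exact: iota_ltn_sorted.
move=> x y; rewrite !mem_iota => x_range y_range xy.
by apply: (ssyt_col_lt lambdaP TP); lia.
Qed.

Lemma pi_init_cat :
  pi_init n lambda T = col1 ++ [seq k <- iota 1 n | k \notin col1].
Proof.
rewrite /pi_init sorted_sort //; first exact: leq_trans.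
by apply: sub_sorted col1_sorted => a b /ltnW.
Qed.

Lemma perm_pi_init : perm_eq (pi_init n lambda T) (iota 1 n).
Proof.
have col1_sub : {subset col1 <= iota 1 n}.
  move=> x /mapP [i]; rewrite mem_iota => i_range ->; rewrite mem_iota.
  case: TP => T_range _; have := T_range 1 i; rewrite collen_in_diagram //; lia.
have col1_perm : perm_eq col1 [seq k <- iota 1 n | k \in col1].
  apply: uniq_perm; first exact: (sorted_uniq ltn_trans ltnn col1_sorted).
    by rewrite filter_uniq ?iota_uniq.
  by move=> x; rewrite mem_filter; case: (boolP (x \in col1)) => //= /col1_sub.
rewrite pi_init_cat; apply: perm_trans (perm_cat col1_perm (perm_refl _)) _.
by have /permPl := perm_filterC (fun k => k \in col1) (iota 1 n).
Qed.

Lemma greedy_init : inv 1 0 (pi_init n lambda T).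
Proof.
have size_col1 : size col1 = collen lambda 1 by rewrite size_map size_iota.
have size_init := size_perm_iota perm_pi_init.
split=> [||k k_range|k k_range _]; first exact: perm_pi_init; first lia.
  rewrite pi_init_cat /pi_at nth_cat size_col1 ifT; last lia.
  by rewrite (nth_map 0) ?size_iota ?nth_iota; [congr T; lia | lia | lia].
move: size_init; rewrite pi_init_cat /pi_at !nth_cat size_cat size_col1 !ifF; try lia.
set F := [seq _ <- _ | _] => size_F.
have F_sorted : sorted ltn F.
  by apply: sorted_filter; [exact: ltn_trans | exact: iota_ltn_sorted].
by apply: (sorted_ltn_nth ltn_trans 0 F_sorted); rewrite ?inE; lia.
Qed.

Lemma greedy_columns m : m < ncols lambda ->
  exists2 p, greedy_fold (Some (pi_init n lambda T))
    (flatten [seq [seq (j, i) | i <- rev (iota 1 (collen lambda j))] | j <- iota 2 m])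
    = Some p & inv m.+1 0 p.
Proof.
elim: m => [|m IH] m_lt; first by exists (pi_init n lambda T); last exact: greedy_init.
have [p fold_p inv_p] := IH (ltnW m_lt).
have -> : iota 2 m.+1 = rcons (iota 2 m) m.+2 by rewrite -cats1 -(addn1 m) iotaD add2n addn1.
rewrite map_rcons flatten_rcons foldl_cat fold_p.
apply: (greedy_column (isT : 1 < m.+2) (leqnn _)).
exact: greedy_next_column.
Qed.

End Greedy.

Theorem corollary4p2 (n : nat) (lambda : seq nat) (T : nat -> nat -> nat) :
  0 < n ->
  is_npartition n lambda ->
  nonzero_partition lambda ->
  lam lambda n = 0 ->
  is_ssyt n lambda T ->
  exists p, piT n lambda T = Some p /\ in_Snlam n lambda p.
Proof.
move=> _ lambdaP lambda_nz _ TP.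
have ncols_gt0 := ncols_gt0 lambdaP lambda_nz.
have last_col : (ncols lambda).-1 < ncols lambda by rewrite ltn_predL.
have [p fold_p inv_p] := greedy_columns lambdaP TP last_col.
rewrite prednK // in inv_p; exists p; split; first exact: fold_p.
have [p_perm _ _ _] := inv_p.
apply: (in_Snlam_of_ascents lambdaP p_perm).
by apply: (greedy_inv_ascents lambdaP TP _ inv_p); rewrite ncols_gt0 leqnn.
Qed.
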